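(* Let $G$ be a connected graph, and let $P$ be an ear of $G$ containing at least five vertices. Let $H$ be the subgraph of $G$ induced by removing the internal vertices of $P$. If $\overline{H}$ has an orthogonal vector representation in $\mathbb{R}^3$ consisting of pairwise linearly independent vectors, then so does $\overline{G}$.
   Context: All graphs are finite and simple; $\overline{G}$ denotes the complement of $G$. An ear of a graph $G$ is a maximal path subgraph of $G$ whose internal vertices each have degree 2 in $G$. An orthogonal vector representation of a graph $G=(V,E)$ in $\mathbb{R}^d$ is a map $\phi:V\to\mathbb{R}^d$ with $\phi(v)\neq 0$ for all $v$, and for distinct $u,v$: $\langle\phi(u),\phi(v)\rangle=0$ if and only if $uv\notin E$. *)

From HB Require Import structures.
From mathcomp Require Import all_boot all_order all_algebra.
From mathcomp Require Import reals.
Set Implicit Arguments. Unset Strict Implicit. Unset Printing Implicit Defensive.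
Import Order.TTheory GRing.Theory Num.Theory.
Local Open Scope ring_scope.

(* A finite simple graph is a symmetric irreflexive relation e on a finType T. *)

Definition compl_graph (T : finType) (e : rel T) : rel T :=
  fun x y => (x != y) && ~~ e x y.

Definition connected_graph (T : finType) (e : rel T) : Prop :=
  forall x y : T, connect e x y.

Definition deg (T : finType) (e : rel T) (x : T) : nat := #|[set y | e x y]|.

Definition gpath (T : finType) (e : rel T) (p : seq T) : bool :=
  uniq p && (if p is x :: s then path e x s else true).

Definition internal (T : eqType) (p : seq T) : seq T := drop 1 (take (size p).-1 p).

Definition path_edge (T : eqType) (q : seq T) (x y : T) : bool :=
  has (fun ab : T * T => ((ab.1 == x) && (ab.2 == y)) || ((ab.1 == y) && (ab.2 == x)))
      (zip q (behead q)).

Definition path_subgraph (T : eqType) (p q : seq T) : bool :=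
  all (fun x => x \in q) p &&
  all (fun xy : T * T => path_edge q xy.1 xy.2) (zip p (behead p)).

Definition deg2_path (T : finType) (e : rel T) (p : seq T) : bool :=
  gpath e p && all (fun v => deg e v == 2)%N (internal p).

Definition is_ear (T : finType) (e : rel T) (p : seq T) : Prop :=
  [/\ p != [::], deg2_path e p &
      forall q : seq T, deg2_path e q -> path_subgraph p q -> (size q <= size p)%N].

Definition induced_rel (T : finType) (e : rel T) (P : pred T) : rel {x : T | P x} :=
  fun x y => e (val x) (val y).
Arguments induced_rel {T} e P.

Definition dotv (R : realType) (u v : 'rV[R]_3) : R := (u *m v^T) 0 0.

Definition ortho_rep (R : realType) (V : finType) (f : rel V) (phi : V -> 'rV[R]_3) : Prop :=
  (forall v, phi v != 0) /\
  (forall u v, u != v -> (dotv (phi u) (phi v) == 0) = ~~ f u v).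

Definition pairwise_indep (R : realType) (V : finType) (phi : V -> 'rV[R]_3) : Prop :=
  forall u v, u != v -> row_free (col_mx (phi u) (phi v)).

From HB Require Import structures.
From mathcomp Require Import all_boot all_order all_algebra.
From mathcomp Require Import reals.
From mathcomp Require Import ring lra zify.
Set Implicit Arguments. Unset Strict Implicit. Unset Printing Implicit Defensive.
Import Order.TTheory GRing.Theory Num.Theory.
Local Open Scope ring_scope.

(* An orthogonal representation of the complement of G asks phi u . phi v = 0 exactly
   when uv is an edge of G. Starting from the representation of H, the internal vertices
   v_1, ..., v_(k-1) of the ear v_0 ... v_k are placed in order. A vertex whose only
   placed neighbour is m receives cross (phi m) y: it is orthogonal to phi m, and for y
   off finitely many planes (found by a non-root of a polynomial along the moment curve)
   it is neither orthogonal nor parallel to any other placed vector. The last two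
   internal vertices are placed together: x1 = cross (phi v_(k-3)) y, then
   x2 = cross x1 (phi v_k), orthogonal to both of its neighbours. This needs
   phi v_(k-3) . phi v_k <> 0, i.e. v_(k-3) internal and not adjacent to v_k, which is
   where k >= 4 (at least five vertices) is used; connectivity, irreflexivity and the
   maximality of the ear are not. *)

Lemma exists_nonroot (F : numDomainType) (P : {poly F}) : P != 0 -> exists t, ~~ root P t.
Proof.
move=> P_neq0; set nats := [seq (i%:R : F) | i <- iota 0 (size P)].
have nats_uniq : uniq nats.
  by rewrite map_inj_uniq ?iota_uniq // => i j /eqP; rewrite eqr_nat => /eqP.
have [all_roots|/allPn [t _ t_nonroot]] := boolP (all (root P) nats); last by exists t.
by have := max_poly_roots P_neq0 all_roots nats_uniq; rewrite size_map size_iota ltnn.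
Qed.

Section CrossProduct.
Variable R : realType.
Implicit Types (a b : R) (u v w x y z n m : 'rV[R]_3) (ws zs : seq 'rV[R]_3).

Definition c0 : 'I_3 := @Ordinal 3 0 isT.
Definition c1 : 'I_3 := @Ordinal 3 1 isT.
Definition c2 : 'I_3 := @Ordinal 3 2 isT.

Lemma row3P u v : u 0 c0 = v 0 c0 -> u 0 c1 = v 0 c1 -> u 0 c2 = v 0 c2 -> u = v.
Proof.
by move=> h0 h1 h2; apply/rowP => -[[|[|[|//]]] i_lt]; rewrite (bool_irrelevance i_lt isT).
Qed.

Lemma dotvE u v : dotv u v = u 0 c0 * v 0 c0 + u 0 c1 * v 0 c1 + u 0 c2 * v 0 c2.
Proof.
rewrite /dotv !mxE !big_ord_recr big_ord0 /= !mxE add0r.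
by congr (_ * _ + _ * _ + _ * _); congr (_ _ _); apply/val_inj.
Qed.

Fact cross_key : unit. Proof. exact: tt. Qed.
Definition cross u v : 'rV[R]_3 := locked_with cross_key
  (\row_(i < 3) (if i == c0 then u 0 c1 * v 0 c2 - u 0 c2 * v 0 c1
                 else if i == c1 then u 0 c2 * v 0 c0 - u 0 c0 * v 0 c2
                 else u 0 c0 * v 0 c1 - u 0 c1 * v 0 c0)).

Lemma cross0E u v : cross u v 0 c0 = u 0 c1 * v 0 c2 - u 0 c2 * v 0 c1.
Proof. by rewrite /cross unlock mxE. Qed.
Lemma cross1E u v : cross u v 0 c1 = u 0 c2 * v 0 c0 - u 0 c0 * v 0 c2.
Proof. by rewrite /cross unlock mxE. Qed.
Lemma cross2E u v : cross u v 0 c2 = u 0 c0 * v 0 c1 - u 0 c1 * v 0 c0.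
Proof. by rewrite /cross unlock mxE. Qed.

Ltac coord3 :=
  rewrite ?dotvE; do 4 rewrite ?cross0E ?cross1E ?cross2E ?mxE; try apply: row3P;
  rewrite ?mxE; do 4 rewrite ?cross0E ?cross1E ?cross2E ?mxE; ring.

Lemma dotvC u v : dotv u v = dotv v u.
Proof. coord3. Qed.

Lemma dotv0 u : dotv u 0 = 0.
Proof. coord3. Qed.

Lemma crossC u v : cross u v = - cross v u.
Proof. coord3. Qed.

Lemma cross0v u : cross 0 u = 0.
Proof. coord3. Qed.

Lemma crossv0 u : cross u 0 = 0.
Proof. coord3. Qed.

Lemma dotv_crossl u v : dotv (cross u v) u = 0.
Proof. coord3. Qed.

Lemma dotv_crossr u v : dotv (cross u v) v = 0.
Proof. coord3. Qed.

Lemma dotv_crossA u v w : dotv (cross u v) w = dotv u (cross v w).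
Proof. coord3. Qed.

Lemma dotv_cross_rot u v w : dotv (cross u v) w = dotv v (cross w u).
Proof. coord3. Qed.

Lemma cross_cross u v w : cross u (cross v w) = dotv u w *: v - dotv u v *: w.
Proof. coord3. Qed.

Lemma binet_cauchy u v w z :
  dotv (cross u v) (cross w z) = dotv u w * dotv v z - dotv u z * dotv v w.
Proof. coord3. Qed.

Lemma cross_combl a b u v : cross (a *: u + b *: v) v = a *: cross u v.
Proof. coord3. Qed.

Lemma dot0v u : dotv 0 u = 0.
Proof. by rewrite dotvC dotv0. Qed.

Lemma dotvv_eq0 u : (dotv u u == 0) = (u == 0).
Proof.
apply/eqP/eqP => [|->]; last exact: dotv0.
rewrite dotvE => u2_eq0; apply: row3P; rewrite mxE; nra.
Qed.

Lemma dotv_neq0l u v : dotv u v != 0 -> u != 0.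
Proof. by apply: contraNneq => ->; rewrite dot0v. Qed.

Lemma cross_neq0l u v : cross u v != 0 -> u != 0.
Proof. by apply: contraNneq => ->; rewrite cross0v. Qed.

Lemma cross_eq0C u v : (cross u v == 0) = (cross v u == 0).
Proof. by rewrite crossC oppr_eq0. Qed.

Lemma orth_cross_neq0 u v : u != 0 -> v != 0 -> dotv u v = 0 -> cross u v != 0.
Proof.
move=> u_neq0 v_neq0 uv0; apply/eqP => uv_eq0.
have := binet_cauchy u v u v; rewrite uv_eq0 dot0v (dotvC v u) uv0 mulr0 subr0 => /esym/eqP.
by rewrite mulf_eq0 !dotvv_eq0 (negbTE u_neq0) (negbTE v_neq0).
Qed.

Lemma cross_eq0_dotv u w z : u != 0 -> cross w u = 0 -> dotv u z = 0 -> dotv w z = 0.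
Proof.
move=> u_neq0 wu0 uz0; have := binet_cauchy w u z u.
rewrite wu0 dot0v uz0 mulr0 subr0 => /esym/eqP.
by rewrite mulf_eq0 dotvv_eq0 (negbTE u_neq0) orbF => /eqP.
Qed.

Lemma col_mx_dep a b u v :
  (a != 0) || (b != 0) -> a *: u + b *: v = 0 -> ~~ row_free (col_mx u v).
Proof.
move=> ab_neq0 uv_dep; apply/negP => /(mulmx_free_eq0 (row_mx a%:M b%:M)).
rewrite mul_row_col !mul_scalar_mx uv_dep eqxx row_mx_eq0 !fmorph_eq0.
by move/esym/andP => [/eqP a0 /eqP b0]; move: ab_neq0; rewrite a0 b0 eqxx.
Qed.

Lemma row_free_col_mx_cross u v : row_free (col_mx u v) = (cross u v != 0).
Proof.
apply/idP/idP => [uv_free|uv_neq0].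
  apply: contraTneq uv_free => /eqP; rewrite cross_eq0C => /eqP vu0.
  have [->|u_neq0] := eqVneq u 0.
    by apply: (@col_mx_dep 1 0); rewrite ?oner_neq0 // scaler0 scale0r addr0.
  apply: (@col_mx_dep (- dotv u v) (dotv u u)); first by rewrite dotvv_eq0 u_neq0 orbT.
  by rewrite scaleNr addrC -cross_cross vu0 crossv0.
apply: inj_row_free => z.
rewrite -[z]hsubmxK (mx11_scalar (lsubmx z)) (mx11_scalar (rsubmx z)).
rewrite mul_row_col !mul_scalar_mx; set a := lsubmx z 0 0; set b := rsubmx z 0 0.
move=> uv_dep; apply/eqP; rewrite row_mx_eq0 !fmorph_eq0.
have := cross_combl a b u v; have := cross_combl b a v u.
rewrite addrC uv_dep !cross0v => /esym/eqP + /esym/eqP.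
by rewrite !scaler_eq0 (negbTE uv_neq0) -cross_eq0C (negbTE uv_neq0) !orbF => -> ->.
Qed.

(* Along the moment curve t |-> (1, t, t^2), each [dotv _ z] with [z != 0] is a nonzero
   polynomial in [t], so the finitely many of them have a common non-root. *)
Lemma exists_dotv_neq0 zs : {in zs, forall z, z != 0} -> exists y, {in zs, forall z, dotv y z != 0}.
Proof.
move=> zs_neq0.
pose q z : {poly R} := (z 0 c0)%:P + (z 0 c1)%:P * 'X + (z 0 c2)%:P * 'X^2.
have qE z t : (q z).[t] = dotv (\row_(i < 3) t ^+ i) z.
  by rewrite /q dotvE !mxE !hornerE /= expr1 expr2; ring.
have q_neq0 z : z != 0 -> q z != 0.
  apply: contra_neq => qz0; have coef0 i := congr1 (fun p : {poly R} => p`_i) qz0.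
  by apply: row3P; [move: (coef0 0%N) | move: (coef0 1%N) | move: (coef0 2%N)];
    rewrite /q !coefE /= mxE; lra.
have [t] : exists t, ~~ root (\prod_(z <- zs) q z) t.
  by apply: exists_nonroot; rewrite prodf_seq_neq0; apply/allP => z /zs_neq0 /q_neq0.
rewrite /root horner_prod prodf_seq_neq0 => /allP t_ok.
by exists (\row_(i < 3) t ^+ i) => z /t_ok; rewrite qE.
Qed.

Definition oblique x w := dotv x w != 0 /\ cross x w != 0.

Lemma exists_cross_oblique n ws zs :
  n != 0 -> {in ws, forall w, cross w n != 0} -> {in zs, forall z, z != 0} ->
  exists y, {in ws, forall w, oblique (cross n y) w} /\ {in zs, forall z, dotv y z != 0}.
Proof.
move=> n_neq0 ws_n zs_neq0.
have [y y_ok] : exists y, {in zs ++ [seq cross w n | w <- ws] ++ ws, forall z, dotv y z != 0}.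
  apply: exists_dotv_neq0 => z; rewrite !mem_cat => /or3P [/zs_neq0 //|/mapP [w /ws_n ? ->] //|].
  by move=> /ws_n /cross_neq0l.
exists y; split=> [w w_in|z z_in]; last by apply: y_ok; rewrite mem_cat z_in.
have yw_neq0 : dotv y w != 0 by apply: y_ok; rewrite !mem_cat w_in !orbT.
have xw_neq0 : dotv (cross n y) w != 0.
  by rewrite dotv_cross_rot; apply: y_ok; rewrite !mem_cat (map_f (cross^~ n) w_in) orbT.
split=> //; apply: contra_neq yw_neq0 => xw0.
(* [cross n y] parallel to [w] forces [w] orthogonal to [n];
   Binet-Cauchy then gives [dotv y w = 0]. *)
have wn0 : dotv w n = 0.
  apply: (cross_eq0_dotv (dotv_neq0l xw_neq0)); first by apply/eqP; rewrite cross_eq0C xw0.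
  exact: dotv_crossl.
have := binet_cauchy n y w n; rewrite -dotv_crossA xw0 dot0v (dotvC n w) wn0 mul0r sub0r.
by move/esym/eqP; rewrite oppr_eq0 mulf_eq0 dotvv_eq0 (negbTE n_neq0) => /eqP.
Qed.

Lemma exists_orth_pair n m ws :
  n != 0 -> dotv n m != 0 -> cross n m != 0 ->
  {in ws, forall w, cross w n != 0 /\ cross w m != 0} ->
  exists x1 x2,
    [/\ x1 != 0, dotv x1 n = 0, oblique x1 m & {in ws, forall w, oblique x1 w}] /\
    [/\ x2 != 0, dotv x2 x1 = 0, dotv x2 m = 0, oblique x2 n & {in ws, forall w, oblique x2 w}].
Proof.
move=> n_neq0 nm_neq0 nm_indep ws_ok.
have ws_n : {in m :: ws, forall w, cross w n != 0}.
  by move=> w; rewrite inE => /predU1P [->|/ws_ok []//]; rewrite cross_eq0C.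
pose zs := [seq cross (cross m w) n | w <- n :: ws].
have zs_neq0 : {in zs, forall z, z != 0}.
  move=> _ /mapP [w w_in ->]; have mw_indep : cross m w != 0.
    by rewrite cross_eq0C; move: w_in; rewrite inE => /predU1P [->|/ws_ok []].
  apply: contra_neq nm_neq0 => mwn0; apply: (cross_eq0_dotv mw_indep).
    by apply/eqP; rewrite cross_eq0C mwn0.
  exact: dotv_crossl.
have [y [x1_ok y_ok]] := exists_cross_oblique n_neq0 ws_n zs_neq0.
set x1 := cross n y; pose x2 := cross x1 m.
have x1_neq0 : x1 != 0 by case: (x1_ok m (mem_head _ _)) => /dotv_neq0l.
(* [dotv x2 w = dotv y (cross (cross m w) n)]: this is why [y] has to avoid [zs]. *)
have x2_dot w : w \in n :: ws -> dotv x2 w != 0.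
  move=> w_in; rewrite dotv_crossA dotv_cross_rot.
  by apply/y_ok/(map_f (fun w => cross (cross m w) n)).
have x2_neq0 : x2 != 0 := dotv_neq0l (x2_dot n (mem_head _ _)).
have x2_cross w z : dotv z w != 0 -> dotv x2 z = 0 -> cross x2 w != 0.
  move=> zw_neq0 x2z0; apply: contra_neq zw_neq0 => x2w0; rewrite dotvC.
  by apply: (cross_eq0_dotv x2_neq0) => //; apply/eqP; rewrite cross_eq0C x2w0.
exists x1, x2; split; split=> //.
- exact: dotv_crossl.
- exact: x1_ok (mem_head _ _).
- by move=> w w_in; apply: x1_ok; rewrite inE w_in orbT.
- exact: dotv_crossl.
- exact: dotv_crossr.
- split; first exact: x2_dot (mem_head _ _).
  by apply: (x2_cross _ m); [rewrite dotvC | exact: dotv_crossr].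
- move=> w w_in; split; first by apply: x2_dot; rewrite inE w_in orbT.
  apply: (x2_cross _ x1); last exact: dotv_crossl.
  by case: (x1_ok w); rewrite // inE w_in orbT.
Qed.
End CrossProduct.

Section Representation.
Variables (R : realType) (T : finType) (e : rel T).
Hypothesis e_sym : symmetric e.
Implicit Types (phi : T -> 'rV[R]_3) (A B : pred T).

Definition indep_rep_on phi A :=
  {in A, forall u, phi u != 0} /\
  {in A &, forall u v, u != v ->
     cross (phi u) (phi v) != 0 /\ (dotv (phi u) (phi v) == 0) = e u v}.

Lemma indep_rep_on_sub phi A B : {subset B <= A} -> indep_rep_on phi A -> indep_rep_on phi B.
Proof.
move=> BA [phi_neq0 phi_ok]; split=> [u /BA|u v /BA uA /BA vA]; [exact: phi_neq0 | exact: phi_ok].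
Qed.

Lemma indep_rep_on_restrict (P : pred T) (phiP : {x | P x} -> 'rV[R]_3) :
  ortho_rep (compl_graph (induced_rel e P)) phiP -> pairwise_indep phiP ->
  exists phi, indep_rep_on phi P.
Proof.
move=> [phiP_neq0 phiP_orth] phiP_indep.
exists (fun u => if insub u is Some x then phiP x else 0).
have phiE u (Pu : P u) : (if insub u is Some x then phiP x else 0) = phiP (exist _ u Pu).
  by rewrite insubT.
split=> [u Pu|u v Pu Pv uv]; rewrite !phiE //.
have uv' : exist P u Pu != exist P v Pv by apply: contra uv => /eqP [->].
rewrite -row_free_col_mx_cross phiP_indep //.
by rewrite phiP_orth // /compl_graph uv' negbK.
Qed.

Lemma indep_rep_onT phi :
  indep_rep_on phi predT -> ortho_rep (compl_graph e) phi /\ pairwise_indep phi.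
Proof.
move=> [phi_neq0 phi_ok]; split; first split=> [u|u v uv]; last move=> u v uv.
- exact: phi_neq0.
- by rewrite /compl_graph uv negbK; case: (phi_ok u v isT isT uv).
- by rewrite row_free_col_mx_cross; case: (phi_ok u v isT isT uv).
Qed.

Lemma indep_rep_on_add phi A v x :
  indep_rep_on phi A -> v \notin A -> x != 0 ->
  {in A, forall u, if e v u then dotv x (phi u) = 0 else oblique x (phi u)} ->
  indep_rep_on (fun u => if u == v then x else phi u) [predU1 v & A].
Proof.
move=> [phi_neq0 phi_ok] vA x_neq0 x_ok.
have x_pair u : u \in A -> cross x (phi u) != 0 /\ (dotv x (phi u) == 0) = e v u.
  move=> uA; move: (x_ok u uA); case: (e v u) => [xu0|[/negbTE -> //]].
  by rewrite xu0 eqxx orth_cross_neq0 ?phi_neq0.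
split=> [u|u1 u2]; rewrite !inE; first by case: eqP => [//|_ /= /phi_neq0].
case: (eqVneq u1 v) => [->|u1v] /=; case: (eqVneq u2 v) => [->|u2v] //= u1A u2A u12.
- exact: x_pair.
- by rewrite cross_eq0C dotvC e_sym; apply: x_pair.
- exact: phi_ok.
Qed.

Lemma indep_rep_on_add_leaf phi A v m w0 :
  indep_rep_on phi A -> v \notin A -> m \in A -> w0 \in A -> w0 != m ->
  {in A, forall u, e v u = (u == m)} ->
  exists phi', indep_rep_on phi' [predU1 v & A].
Proof.
move=> phi_rep vA mA w0A w0m v_adj; have [phi_neq0 phi_ok] := phi_rep.
(* [w0] is only needed to certify that the new vector is nonzero. *)
pose ws := [seq phi u | u <- enum [predD1 A & m]].
have phi_ws u : u \in A -> u != m -> phi u \in ws.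
  by move=> uA um; rewrite map_f // mem_enum inE um.
have ws_m : {in ws, forall w, cross w (phi m) != 0}.
  by move=> _ /mapP [u + ->]; rewrite mem_enum inE => /andP [um uA]; case: (phi_ok u m).
have [|y [x_ok _]] := exists_cross_oblique (zs := [::]) (phi_neq0 m mA) ws_m; first by [].
have [/dotv_neq0l x_neq0 _] := x_ok _ (phi_ws _ w0A w0m).
exists (fun u => if u == v then cross (phi m) y else phi u).
apply: indep_rep_on_add => // u uA; rewrite v_adj //.
by case: eqVneq => [->|um]; [apply: dotv_crossl | apply/x_ok/phi_ws].
Qed.

Lemma indep_rep_on_add_pair phi A v1 v2 m b :
  indep_rep_on phi A -> v1 \notin A -> v2 \notin A -> v2 != v1 ->
  m \in A -> b \in A -> m != b -> ~~ e m b -> e v2 v1 ->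
  {in A, forall u, e v1 u = (u == m)} -> {in A, forall u, e v2 u = (u == b)} ->
  exists phi', indep_rep_on phi' [predU1 v2 & [predU1 v1 & A]].
Proof.
move=> phi_rep v1A v2A v21 mA bA mb mb_nadj v21_adj v1_adj v2_adj.
have [phi_neq0 phi_ok] := phi_rep; have [mb_indep mb_orth] := phi_ok m b mA bA mb.
pose ws := [seq phi u | u <- enum [pred u in A | (u != m) && (u != b)]].
have phi_ws u : u \in A -> u != m -> u != b -> phi u \in ws.
  by move=> uA um ub; rewrite map_f // mem_enum inE uA um ub.
have ws_ok : {in ws, forall w, cross w (phi m) != 0 /\ cross w (phi b) != 0}.
  move=> _ /mapP [u + ->]; rewrite mem_enum inE => /and3P [uA um ub].
  by case: (phi_ok u m) => // ? _; case: (phi_ok u b).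
have mb_neq0 : dotv (phi m) (phi b) != 0 by rewrite mb_orth.
have [x1 [x2 [[x1_neq0 x1m x1b x1_ok] [x2_neq0 x2x1 x2b x2m x2_ok]]]] :=
  exists_orth_pair (phi_neq0 m mA) mb_neq0 mb_indep ws_ok.
exists (fun u => if u == v2 then x2 else if u == v1 then x1 else phi u).
apply: indep_rep_on_add; rewrite ?inE ?negb_or ?v21 //.
  apply: indep_rep_on_add => // u uA; rewrite v1_adj //.
  case: eqVneq => [->//|um]; have [->//|ub] := eqVneq u b.
  exact/x1_ok/phi_ws.
move=> u; rewrite inE => /predU1P [->|uA]; first by rewrite v21_adj eqxx.
have -> : (u == v1) = false by apply: contraNF v1A => /eqP <-.
rewrite v2_adj //.
case: eqVneq => [->//|ub]; have [->//|um] := eqVneq u m.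
exact/x2_ok/phi_ws.
Qed.
End Representation.

Section Ear.
Local Open Scope nat_scope.
Variables (T : finType) (e : rel T) (x0 : T) (p : seq T).
Hypothesis e_sym : symmetric e.
Hypothesis p_deg2 : deg2_path e p.
Local Notation N := (size p).
Local Notation v j := (nth x0 p j).

Lemma deg2_path_uniq : uniq p.
Proof. by case/andP: p_deg2 => /andP []. Qed.

Lemma index_ear j : j < N -> index (v j) p = j.
Proof. by move=> jN; rewrite index_uniq ?deg2_path_uniq. Qed.

Lemma ear_inj i j : i < N -> j < N -> (v i == v j) = (i == j).
Proof. by move=> iN jN; rewrite nth_uniq ?deg2_path_uniq. Qed.

Lemma mem_internal u : (u \in internal p) = (0 < index u p < N.-1).
Proof.
have := deg2_path_uniq; rewrite /internal.
case: p => [//|x [|y r]]; first by rewrite /= ltn0 andbF.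
move=> /andP [xr _]; rewrite drop1 /= in_take_leq //.
case: eqVneq => [<-|_]; rewrite ?(memNindex xr) /= ?ltnS //; lia.
Qed.

Lemma ear_edge j : j.+1 < N -> e (v j) (v j.+1).
Proof.
case/andP: p_deg2 => /andP [_]; case: p => [//|x q] /= /(pathP x0) q_path _ jq.
exact: q_path.
Qed.

Lemma ear_adj j u : 0 < j < N.-1 -> e (v j) u = (u == v j.-1) || (u == v j.+1).
Proof.
move=> /andP [j_gt0 jN].
have vj_internal : v j \in internal p by rewrite mem_internal index_ear ?j_gt0 //; lia.
have deg_vj : #|[set y | e (v j) y]| = 2.
  by apply/eqP; case/andP: p_deg2 => _ /allP /(_ _ vj_internal).
have nbrs : [set y | e (v j) y] = [set v j.-1; v j.+1].
  apply/esym/eqP; rewrite eqEcard cards2 deg_vj ear_inj; try lia.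
  rewrite (_ : j.-1 == j.+1 = false) ?leqnn ?andbT; last lia.
  apply/subsetP => y; rewrite !inE => /pred2P [->|->]; last by apply: ear_edge; lia.
  by rewrite e_sym; have := @ear_edge j.-1; rewrite prednK //; apply; lia.
by rewrite -in_set2 -nbrs inE.
Qed.

Definition visited m : pred T := [pred u | (u \notin internal p) || (index u p <= m)].

Lemma visited_ear j m : j < N -> (v j \in visited m) = ~~ (0 < j < N.-1) || (j <= m).
Proof. by move=> jN; rewrite inE mem_internal index_ear. Qed.

Lemma visitedS m : {subset visited m.+1 <= [predU1 v m.+1 & visited m]}.
Proof.
move=> u; rewrite !inE; case: (boolP (u \in internal p)) => /= [u_int|_ _]; last by rewrite orbT.
rewrite leq_eqVlt ltnS => /predU1P [um|->]; last by rewrite orbT.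
rewrite -um nth_index ?eqxx // -index_mem.
by move: u_int; rewrite mem_internal => /andP [_ /leq_trans]; apply; apply: leq_pred.
Qed.

Lemma visited_adj_pred j : 0 < j -> j.+1 < N.-1 ->
  {in visited j.-1, forall u, e (v j) u = (u == v j.-1)}.
Proof.
move=> j_gt0 jN u u_vis; rewrite ear_adj; last lia.
suff -> : (u == v j.+1) = false by rewrite orbF.
by apply: contraTF u_vis => /eqP ->; rewrite visited_ear; lia.
Qed.

Lemma visited_adj_succ j : 1 < j -> j < N.-1 ->
  {in visited j.-2, forall u, e (v j) u = (u == v j.+1)}.
Proof.
move=> j_gt1 jN u u_vis; rewrite ear_adj; last lia.
suff -> : (u == v j.-1) = false by [].
by apply: contraTF u_vis => /eqP ->; rewrite visited_ear; lia.
Qed.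

Lemma indep_rep_ear (R : realType) (phi0 : T -> 'rV[R]_3) :
  4 < N -> indep_rep_on e phi0 [pred u | u \notin internal p] ->
  exists phi : T -> 'rV[R]_3, indep_rep_on e phi predT.
Proof.
move=> N_gt4 phi0_rep; have [k Nk] : exists k, N = k + 5 by exists (N - 5); lia.
have visited_rep m : m <= k.+1 -> exists phi : T -> 'rV[R]_3, indep_rep_on e phi (visited m).
  elim: m => [_|m IH m_le].
    exists phi0; apply: indep_rep_on_sub phi0_rep => u; rewrite !inE mem_internal; lia.
  have [phi phi_rep] := IH (ltnW m_le).
  have [phi' phi'_rep] : exists phi' : T -> 'rV[R]_3,
      indep_rep_on e phi' [predU1 v m.+1 & visited m].
    apply: (indep_rep_on_add_leaf e_sym phi_rep (m := v m) (w0 := v N.-1));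
      rewrite ?visited_ear ?ear_inj; try lia.
    by apply: (@visited_adj_pred m.+1); lia.
  by exists phi'; apply: indep_rep_on_sub phi'_rep; apply: visitedS.
have [phi phi_rep] := visited_rep k.+1 (leqnn _).
have [phi' phi'_rep] : exists phi' : T -> 'rV[R]_3,
    indep_rep_on e phi' [predU1 v k.+3 & [predU1 v k.+2 & visited k.+1]].
  apply: (indep_rep_on_add_pair e_sym phi_rep (m := v k.+1) (b := v N.-1));
    rewrite ?visited_ear ?ear_inj ?ear_adj ?ear_inj; try lia.
  - by apply: (@visited_adj_pred k.+2); lia.
  - by rewrite (_ : N.-1 = k.+4); [apply: (@visited_adj_succ k.+3) | ]; lia.
exists phi'; apply: indep_rep_on_sub phi'_rep => u _.
have /visitedS : u \in visited k.+3 by rewrite inE mem_internal; lia.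
by rewrite !inE => /predU1P [->|/visitedS]; rewrite ?eqxx // inE => ->; rewrite orbT.
Qed.

End Ear.

Theorem proposition4p4 (R : realType) (T : finType) (e : rel T)
  (e_sym : symmetric e) (e_irr : irreflexive e)
  (G_conn : connected_graph e)
  (p : seq T) (p_ear : is_ear e p) (p5 : (5 <= size p)%N) :
  (exists phiH : {x : T | x \notin internal p} -> 'rV[R]_3,
      ortho_rep (compl_graph (induced_rel e (fun x => x \notin internal p))) phiH /\
      pairwise_indep phiH) ->
  exists phiG : T -> 'rV[R]_3,
      ortho_rep (compl_graph e) phiG /\ pairwise_indep phiG.
Proof.
move=> [phiH [phiH_rep phiH_indep]]; case: p_ear => _ p_deg2 _.
have [x0 _] : exists x0 : T, x0 \in p.
  by move: p5; case: (p) => [|x q] // _; exists x; rewrite mem_head.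
have [phi0 phi0_rep] := indep_rep_on_restrict phiH_rep phiH_indep.
have [phi phi_rep] := indep_rep_ear x0 e_sym p_deg2 p5 phi0_rep.
by exists phi; apply: indep_rep_onT.
Qed.
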